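(* Under the assumptions on $\Psi$ stated in the context, let $T\in(0,\infty]$, let $g^{in}\in L^1_{-2\beta,1}(0,\infty)$ be non-negative, and let $g$ be a weak solution on $[0,T)$. Then for every $q\in(0,\infty)$ and $t\in(0,T)$, $\int_0^q\zeta g(\zeta,t)d\zeta-\int_0^q\zeta g^{in}(\zeta)d\zeta=-\int_0^t\int_0^q\int_{q-\zeta}^\infty\zeta\Psi(\zeta,\eta)g(\zeta,s)g(\eta,s)\,d\eta\, d\zeta\, ds.$
   Context: $\Psi:(0,\infty)^2\to[0,\infty)$ is measurable and symmetric and there are $\beta>0$, $k>0$ with $\Psi(\zeta,\eta)\le k(\zeta\eta)^{-\beta}$ on $(0,1)^2$, $\Psi(\zeta,\eta)\le k\eta\zeta^{-\beta}$ on $(0,1)\times(1,\infty)$, and $\Psi(\zeta,\eta)\le k(\zeta+\eta)$ on $(1,\infty)^2$. $L^1_{-2\beta,1}(0,\infty):=L^1((0,\infty);(\zeta^{-2\beta}+\zeta)d\zeta)$. A weak solution on $[0,T)$ is a non-negative $g\in\mathcal{C}([0,T);L^1(0,\infty))\cap L^\infty(0,T;L^1_{-2\beta,1}(0,\infty))$ such that for every $t\in(0,T)$ and $\omega\in L^\infty(0,\infty)$, $\int_0^\infty[g(\zeta,t)-g^{in}(\zeta)]\omega(\zeta)d\zeta=\frac12\int_0^t\int_0^\infty\int_0^\infty[\omega(\zeta+\eta)-\omega(\zeta)-\omega(\eta)]\Psi(\zeta,\eta)g(\zeta,s)g(\eta,s)d\eta d\zeta ds$. *)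

From HB Require Import structures.
From mathcomp Require Import all_boot all_order all_algebra.
From mathcomp Require Import all_classical all_reals all_analysis.
Set Implicit Arguments. Unset Strict Implicit. Unset Printing Implicit Defensive.
Import Order.TTheory GRing.Theory Num.Theory.
Import numFieldNormedType.Exports.
Local Open Scope classical_set_scope.
Local Open Scope ring_scope.

Section Defs.
Variable R : realType.
Local Notation leb := (@lebesgue_measure R).

Definition Ipos : set R := [set x | 0 < x].
Definition Itime0 (T : \bar R) : set R := [set t | 0 <= t /\ (t%:E < T)%E].
Definition Itime (T : \bar R) : set R := [set t | 0 < t /\ (t%:E < T)%E].

Definition kernel_assumptions (beta k : R) (Psi : R -> R -> R) : Prop :=
  0 < beta /\ 0 < k /\
  measurable_fun (Ipos `*` Ipos) (fun p : R * R => Psi p.1 p.2) /\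
  (forall z e, 0 < z -> 0 < e -> 0 <= Psi z e) /\
  (forall z e, 0 < z -> 0 < e -> Psi z e = Psi e z) /\
  (forall z e, 0 < z < 1 -> 0 < e < 1 -> Psi z e <= k * (z * e) `^ (- beta)) /\
  (forall z e, 0 < z < 1 -> 1 < e -> Psi z e <= k * e * z `^ (- beta)) /\
  (forall z e, 1 < z -> 1 < e -> Psi z e <= k * (z + e)).

Definition wgt (beta z : R) : R := z `^ (- (2 * beta)) + z.

Definition in_L1w (beta : R) (f : R -> R) : Prop :=
  measurable_fun Ipos f /\
  (\int[leb]_(z in Ipos) (wgt beta z * `|f z|)%:E < +oo)%E.

Definition in_Linfty (w : R -> R) : Prop :=
  measurable_fun Ipos w /\
  exists M : R, {ae leb, forall z, Ipos z -> `|w z| <= M}.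

Definition weak_solution (beta : R) (Psi : R -> R -> R) (T : \bar R)
    (gin : R -> R) (g : R -> R -> R) : Prop :=
      (forall z t, 0 < z -> Itime0 T t -> 0 <= g z t) /\
      measurable_fun (Ipos `*` Itime0 T) (fun p : R * R => g p.1 p.2) /\
      (* g in C([0,T); L^1(0,oo)) *)
      (forall t, Itime0 T t -> leb.-integrable Ipos (fun z => (g z t)%:E)) /\
      (forall t0, Itime0 T t0 -> forall eps : R, 0 < eps ->
         exists2 d : R, 0 < d & forall t, Itime0 T t -> `|t - t0| < d ->
           (\int[leb]_(z in Ipos) (`|g z t - g z t0|)%:E < eps%:E)%E) /\
      (* g in L^oo(0,T; L^1_{-2beta,1}(0,oo)) *)
      (exists C : R, {ae leb, forall t, Itime T t ->
         (\int[leb]_(z in Ipos) (wgt beta z * `|g z t|)%:E <= C%:E)%E}) /\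
      (forall t, Itime T t -> forall w : R -> R, in_Linfty w ->
         (\int[leb]_(z in Ipos) ((g z t - gin z) * w z)%:E =
          (2^-1 : R)%:E *
          \int[leb]_(s in [set x | (0 < x < t)%R])
            \int[leb]_(z in Ipos) \int[leb]_(e in Ipos)
              ((w (z + e) - w z - w e) * Psi z e * g z s * g e s)%:E)%E).

End Defs.

From HB Require Import structures.
From mathcomp Require Import all_boot all_order all_algebra.
From mathcomp Require Import all_classical all_reals all_analysis.
From mathcomp Require Import ring lra measurable_realfun.
Import Order.TTheory GRing.Theory Num.Theory.
Import numFieldNormedType.Exports.
Local Open Scope classical_set_scope.
Local Open Scope ring_scope.

(* Test the weak formulation with w_q(z) = z 1_{z < q}, which is bounded by q, so that its
   left-hand side becomes the difference of the first moments truncated at q.  For z, e > 0,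
     w_q(z + e) - w_q(z) - w_q(e) = - (z 1[z < q <= z + e] + e 1[e < q <= z + e]),
   and since Psi is symmetric, Tonelli's theorem shows that both terms contribute the same
   amount, so the collision term equals -2 times the mass flux across q; the endpoint
   e = q - z of the inner integral is a null set.  Every exchange of integrals is Tonelli's,
   on nonnegative integrands. *)

Section integral_complements.
Local Open Scope ereal_scope.
Context {d} {T : measurableType d} {R : realType} (mu : {measure set T -> \bar R}).
Import HBNNSimple.

Lemma eq_integral_domains (D1 D2 : set T) (f1 f2 : T -> \bar R) :
  (forall x, D1 x -> D2 x -> f1 x = f2 x) ->
  (forall x, D1 x -> ~ D2 x -> f1 x = 0) ->
  (forall x, ~ D1 x -> D2 x -> f2 x = 0) ->
  \int[mu]_(x in D1) f1 x = \int[mu]_(x in D2) f2 x.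
Proof.
move=> f12 f1_0 f2_0; rewrite (integral_mkcond D1) (integral_mkcond D2).
apply: eq_integral => x _; rewrite /patch.
case: ifPn => [/set_mem|/negP] D1x; case: ifPn => [/set_mem|/negP] D2x.
- exact: f12.
- by apply: f1_0 => // ?; apply: D2x; exact: mem_set.
- by rewrite f2_0 // => ?; apply: D1x; exact: mem_set.
- by [].
Qed.

(* Variants of library lemmas without their measurability assumptions; for instance, the
   nested integrals of the weak formulation are not known to be measurable in time. *)
Lemma ge0_le_integral_nonmeas (D : set T) (f1 f2 : T -> \bar R) :
  (forall x, D x -> 0 <= f1 x) -> (forall x, D x -> f1 x <= f2 x) ->
  \int[mu]_(x in D) f1 x <= \int[mu]_(x in D) f2 x.
Proof.
move=> f1_ge0 f12.
have f2_ge0 x : D x -> 0 <= f2 x by move=> Dx; exact: le_trans (f1_ge0 x Dx) (f12 x Dx).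
rewrite (ge0_integralE _ f1_ge0) (ge0_integralE _ f2_ge0).
apply: ereal_sup_le => _ [h hf1 <-]; exists h => // x.
apply: le_trans (hf1 x) _; rewrite /patch; case: ifP => // /set_mem; exact: f12.
Qed.

Let nnsfun_scale_le {D : set T} {F : T -> \bar R} {h : {nnsfun T >-> R}} {c : R} :
  (0 < c)%R -> (forall x, (h x)%:E <= (F \_ D) x) ->
  forall x, (c * h x)%:E <= ((fun x => c%:E * F x) \_ D) x.
Proof.
move=> c_gt0 hF x; move: (hF x); rewrite /patch; case: ifP => Dx hx.
  by rewrite EFinM lee_pmul2l ?lte_fin.
have -> : h x = 0%R by apply/eqP; rewrite eq_le -lee_fin hx /= fun_ge0.
by rewrite mulr0.
Qed.

Lemma ge0_integralZl_nonmeas (D : set T) (f : T -> \bar R) (k : R) :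
  (0 <= k)%R -> (forall x, D x -> 0 <= f x) ->
  \int[mu]_(x in D) (k%:E * f x) = k%:E * \int[mu]_(x in D) f x.
Proof.
rewrite le_eqVlt => /predU1P[<- _|k_gt0 f_ge0].
  by rewrite mul0e; under eq_integral do rewrite mul0e; rewrite integral0.
have kf_ge0 x : D x -> 0 <= k%:E * f x.
  by move=> Dx; apply: mule_ge0; [rewrite lee_fin ltW|exact: f_ge0].
rewrite (ge0_integralE _ kf_ge0) (ge0_integralE _ f_ge0) -ereal_supZl ?ltW//;
  last first.
  apply/set0P; exists (sintegral mu (@nnsfun0 _ T R)); exists nnsfun0 => // x /=.
  by rewrite /patch; case: ifP => // /set_mem Dx; rewrite f_ge0.
have kV_ge0 : (0 <= k^-1)%R by rewrite invr_ge0 ltW.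
congr ereal_sup; apply/seteqP; split.
- move=> _ /= [h hkf <-]; exists (sintegral mu (scale_nnsfun h kV_ge0)).
    exists (scale_nnsfun h kV_ge0) => //=.
    have kV_gt0 : (0 < k^-1)%R by rewrite invr_gt0.
    move=> x; have := nnsfun_scale_le kV_gt0 hkf x.
    by rewrite /patch; case: ifP => // _; rewrite muleA -EFinM mulVf ?gt_eqF// mul1e.
  by rewrite [sintegral _ _]sintegralrM muleA -EFinM mulfV ?gt_eqF// mul1e.
- move=> _ /= [_ [h hf <-] <-]; exists (scale_nnsfun h (ltW k_gt0)).
    exact: nnsfun_scale_le.
  by rewrite [sintegral _ _]sintegralrM.
Qed.

Lemma integrable_of_bound (D : set T) (f : T -> R) (h : T -> \bar R) :
  measurable_fun D f -> (forall x, D x -> `|f x|%:E <= h x) ->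
  \int[mu]_(x in D) h x < +oo -> mu.-integrable D (EFin \o f).
Proof.
move=> mf fh h_fin; apply/integrableP; split; first exact/measurable_EFinP.
by apply: le_lt_trans h_fin; apply: ge0_le_integral_nonmeas.
Qed.

End integral_complements.

Lemma ge0_integral_symmetrize {d} {T : measurableType d} {R : realType}
    (mu : {sigma_finite_measure set T -> \bar R}) (f : T * T -> \bar R) :
  measurable_fun setT f -> (forall p, (0 <= f p)%E) ->
  (\int[mu]_x \int[mu]_y (f (x, y) + f (y, x)) =
   2%:E * \int[mu]_x \int[mu]_y f (x, y))%E.
Proof.
move=> mf f_ge0; pose fswap := f \o @unstable.swap T T.
have mfswap : measurable_fun setT fswap.
  by apply: measurableT_comp; [exact: mf|exact: measurable_swap].
have fswap_ge0 p : (0 <= fswap p)%E by exact: f_ge0.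
have mfsym : measurable_fun setT (fun p => f p + fswap p)%E.
  exact: emeasurable_funD.
have fsym_ge0 p : (0 <= f p + fswap p)%E by exact: adde_ge0.
rewrite [LHS](esym (@fubini_tonelli1 _ _ _ _ _ mu mu _ mfsym fsym_ge0)).
rewrite ge0_integralD // (@fubini_tonelli1 _ _ _ _ _ mu mu _ mf f_ge0).
rewrite (@fubini_tonelli1 _ _ _ _ _ mu mu _ mfswap fswap_ge0) /fubini_F /=.
rewrite [X in (_ + X)%E](@fubini_tonelli _ _ _ _ _ mu mu _ mfswap fswap_ge0) /=.
by rewrite -mule2n -mule_natl.
Qed.

Definition trunc_id {R : numDomainType} (q z : R) : R := if z < q then z else 0.

Definition crossing {R : numDomainType} (q z e : R) : bool := (z < q) && (q <= z + e).

Lemma trunc_id_defect {R : realDomainType} (q z e : R) : 0 < z -> 0 < e ->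
  trunc_id q (z + e) - trunc_id q z - trunc_id q e =
  - ((if crossing q z e then z else 0) + (if crossing q e z then e else 0)).
Proof.
move=> z_gt0 e_gt0; rewrite /trunc_id /crossing (addrC e z).
by case: (ltP z q); case: (ltP e q); case: (ltP (z + e) q) => /=; lra.
Qed.

Lemma norm_trunc_id_le {R : realDomainType} (q z : R) : 0 < z -> `|trunc_id q z| <= z.
Proof.
by move=> z_gt0; rewrite /trunc_id; case: ifP => _; rewrite ?normr0 ?gtr0_norm // ltW.
Qed.

Lemma norm_trunc_id_le_cut {R : realDomainType} (q z : R) : 0 < z -> 0 <= q ->
  `|trunc_id q z| <= q.
Proof.
by move=> z_gt0 q_ge0; rewrite /trunc_id; case: ifP => [/ltW|_]; rewrite ?normr0 ?gtr0_norm.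
Qed.

Lemma measurable_trunc_id {R : realType} (q : R) : measurable_fun setT (trunc_id q).
Proof. by apply: measurable_fun_ifT => //; exact: measurable_fun_ltr. Qed.

Lemma trunc_id_in_Linfty {R : realType} (q : R) : 0 <= q -> in_Linfty (trunc_id q).
Proof.
move=> q_ge0; split.
  exact: measurable_funS measurableT (@subsetT _ _) (measurable_trunc_id q).
by exists q; apply: aeW => z z_gt0; exact: norm_trunc_id_le_cut.
Qed.

Section truncated_moments.
Variable R : realType.
Local Notation leb := (@lebesgue_measure R).
Local Notation Ipos := (@Ipos R).

Let mtrunc_id q : measurable_fun Ipos (trunc_id q).
Proof. exact: measurable_funS measurableT (@subsetT _ _) (measurable_trunc_id q). Qed.

Lemma integral_mul_trunc_id (q : R) (f : R -> R) :
  (\int[leb]_(z in Ipos) (f z * trunc_id q z)%:E =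
   \int[leb]_(z in [set x | (0 < x < q)%R]) (z * f z)%:E)%E.
Proof.
apply: eq_integral_domains => z /=.
- by move=> _ /andP[_ zq]; rewrite /trunc_id zq mulrC.
- move=> z_gt0 zNq; rewrite /trunc_id ifF ?mulr0 //.
  by apply/negP => zq; apply: zNq; rewrite z_gt0.
- by move=> + /andP[].
Qed.

Lemma integrable_mul_trunc_id (q : R) (f : R -> R) : 0 <= q ->
  leb.-integrable Ipos (EFin \o f) ->
  leb.-integrable Ipos (EFin \o (fun z => f z * trunc_id q z)).
Proof.
move=> q_ge0 /integrableP[/measurable_EFinP mf f_fin].
apply: (integrable_of_bound leb Ipos _ (fun z => q%:E * `|(f z)%:E|)%E).
- exact: measurable_funM mf (mtrunc_id q).
- move=> z z_gt0; rewrite -EFinM lee_fin normrM mulrC ler_wpM2r //.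
  exact: norm_trunc_id_le_cut.
- by rewrite ge0_integralZl_nonmeas // lte_mul_pinfty.
Qed.

Lemma in_L1w_integrable_mul_trunc_id (beta q : R) (f : R -> R) : in_L1w beta f ->
  leb.-integrable Ipos (EFin \o (fun z => f z * trunc_id q z)).
Proof.
move=> [mf f_fin]; apply: (integrable_of_bound leb Ipos _ _ _ _ f_fin).
- exact: measurable_funM mf (mtrunc_id q).
- move=> z z_gt0; rewrite lee_fin normrM mulrC ler_wpM2r //.
  by apply: le_trans (norm_trunc_id_le q _ z_gt0) _; rewrite /wgt lerDr powR_ge0.
Qed.

Lemma integral_diff_mul_trunc_id (q : R) (f1 f2 : R -> R) :
  leb.-integrable Ipos (EFin \o (fun z => f1 z * trunc_id q z)) ->
  leb.-integrable Ipos (EFin \o (fun z => f2 z * trunc_id q z)) ->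
  (\int[leb]_(z in Ipos) ((f1 z - f2 z) * trunc_id q z)%:E =
   \int[leb]_(z in [set x | (0 < x < q)%R]) (z * f1 z)%:E -
   \int[leb]_(z in [set x | (0 < x < q)%R]) (z * f2 z)%:E)%E.
Proof.
move=> int1 int2; have mIpos : measurable Ipos by rewrite /Ipos -set_itvoy.
under eq_integral do rewrite mulrBl EFinB.
by rewrite integralB_EFin // !integral_mul_trunc_id.
Qed.

End truncated_moments.

Section collision_term.
Variables (R : realType) (Psi : R -> R -> R) (G : R -> R) (q : R).
Local Notation leb := (@lebesgue_measure R).
Local Notation Ipos := (@Ipos R).
Hypothesis mPsi : measurable_fun (Ipos `*` Ipos) (fun p : R * R => Psi p.1 p.2).
Hypothesis Psi_ge0 : forall z e, 0 < z -> 0 < e -> 0 <= Psi z e.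
Hypothesis Psi_sym : forall z e, 0 < z -> 0 < e -> Psi z e = Psi e z.
Hypothesis mG : measurable_fun Ipos G.
Hypothesis G_ge0 : forall z, 0 < z -> 0 <= G z.

Let mIpos : measurable Ipos. Proof. by rewrite /Ipos -set_itvoy. Qed.

(* Extending Psi and G by 0 outside (0, oo) makes the flux measurable on all of R x R,
   as Tonelli's theorem requires. *)
Let Psir := (fun p : R * R => Psi p.1 p.2) \_ (Ipos `*` Ipos).
Let Gr := G \_ Ipos.

Let flux (z e : R) : R := (if crossing q z e then z else 0) * Psir (z, e) * Gr z * Gr e.

Let Gr_out z : ~ 0 < z -> Gr z = 0.
Proof. by move=> z_le0; rewrite /Gr /patch ifN //; apply/negP => /set_mem. Qed.

Let Gr_in z : 0 < z -> Gr z = G z.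
Proof. by move=> z_gt0; rewrite /Gr patchT // in_setE. Qed.

Let flux_in z e : 0 < z -> 0 < e ->
  flux z e = (if crossing q z e then z else 0) * Psi z e * G z * G e.
Proof.
by move=> z_gt0 e_gt0; rewrite /flux /Psir patchT ?Gr_in // in_setE.
Qed.

Let flux_out_l z e : ~ 0 < z -> flux z e = 0.
Proof. by move=> /Gr_out Grz; rewrite /flux Grz mulr0 mul0r. Qed.

Let flux_out_r z e : ~ 0 < e -> flux z e = 0.
Proof. by move=> /Gr_out Gre; rewrite /flux Gre mulr0. Qed.

Let flux_ge0 z e : 0 <= flux z e.
Proof.
have [z_gt0|/negP z_le0] := boolP (0 < z); last by rewrite flux_out_l.
have [e_gt0|/negP e_le0] := boolP (0 < e); last by rewrite flux_out_r.
rewrite flux_in // !mulr_ge0 ?G_ge0 ?Psi_ge0 //.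
by case: ifP => // _; exact: ltW.
Qed.

Let measurable_flux : measurable_fun setT (fun p : R * R => (flux p.1 p.2)%:E).
Proof.
have mPsir : measurable_fun setT Psir.
  by apply/(measurable_restrictT _ _).1 => //; exact: measurableX.
have mGr : measurable_fun setT Gr by apply/(measurable_restrictT _ _).1.
apply/measurable_EFinP.
apply: measurable_funM; last exact: measurableT_comp mGr measurable_snd.
apply: measurable_funM; last exact: measurableT_comp mGr measurable_fst.
apply: measurable_funM; last first.
  exact: measurableT_comp mPsir (measurable_fun_pair measurable_fst measurable_snd).
apply: measurable_fun_ifT; last 2 first.
- exact: measurable_fst.
- exact: measurable_cst.
apply: measurable_and.
- exact: measurable_fun_ltr measurable_fst (measurable_cst _).
- apply: measurable_fun_ler; first exact: measurable_cst.
  exact: measurable_funD measurable_fst measurable_snd.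
Qed.

Let integral_defect :
  (\int[leb]_(z in Ipos) \int[leb]_(e in Ipos)
     ((trunc_id q (z + e) - trunc_id q z - trunc_id q e) * Psi z e * G z * G e)%:E =
   - \int[leb]_z \int[leb]_e ((flux z e)%:E + (flux e z)%:E))%E.
Proof.
have flux2_ge0 z e : (0 <= (flux z e)%:E + (flux e z)%:E)%E by rewrite adde_ge0 ?lee_fin.
transitivity
  (\int[leb]_(z in Ipos) - \int[leb]_(e in Ipos) ((flux z e)%:E + (flux e z)%:E))%E.
  apply: eq_integral => z /set_mem z_gt0.
  rewrite -integral_ge0N //; apply: eq_integral => e /set_mem e_gt0.
  rewrite trunc_id_defect // !flux_in // (Psi_sym e z) // -EFinD -EFinN.
  by congr EFin; move: (if _ then z else 0) (if _ then e else 0) => cz ce; ring.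
rewrite integral_ge0N; last by move=> z _; exact: integral_ge0.
congr (- _)%E; apply: eq_integral_domains => z; last 2 first.
- by move=> _ /(_ I).
- move=> z_le0 _; apply: integral0_eq => e _.
  by rewrite flux_out_l // flux_out_r // adde0.
move=> _ _; apply: eq_integral_domains => e //; first by move=> _ /(_ I).
by move=> e_le0 _; rewrite flux_out_r // flux_out_l // adde0.
Qed.

Let integral_flux :
  (\int[leb]_z \int[leb]_e (flux z e)%:E =
   \int[leb]_(z in [set x | (0 < x < q)%R])
     \int[leb]_(e in [set x | (q - z < x)%R]) (z * Psi z e * G z * G e)%:E)%E.
Proof.
symmetry; apply: eq_integral_domains => z; first last.
- move=> zNq _; apply: integral0_eq => e _.
  have [z_gt0|/negP z_le0] := boolP (0 < z); last by rewrite flux_out_l.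
  rewrite /flux /crossing ifF ?mul0r //.
  by apply/negP => /andP[zq _]; apply: zNq; rewrite /= z_gt0 zq.
- by move=> _ /(_ I).
move=> /andP[z_gt0 zq] _.
have flux_crossing e : q - z <= e -> flux z e = z * Psi z e * G z * G e.
  move=> ze; have e_gt0 : 0 < e by apply: lt_le_trans ze; rewrite subr_gt0.
  by rewrite flux_in // /crossing zq -lerBlDl ze.
have mflux_z : measurable_fun setT (fun e => (flux z e)%:E).
  exact: measurable_fun_pair2 z measurable_flux.
transitivity (\int[leb]_(e in `[(q - z)%R, +oo[) (flux z e)%:E)%E; last first.
  apply: eq_integral_domains => e //; first by move=> _ /(_ I).
  move=> /= eNq _; rewrite /flux /crossing ifF ?mul0r //.
  by apply/negP => /andP[_]; rewrite -lerBlDl => ze; apply: eNq; rewrite in_itv /= ze.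
rewrite -integral_itv_obnd_cbnd; last exact: measurable_funS mflux_z.
rewrite set_itvoy; apply: eq_integral => e /set_mem /= ze.
by rewrite flux_crossing // ltW.
Qed.

Lemma integral_collision_trunc_id :
  (\int[leb]_(z in Ipos) \int[leb]_(e in Ipos)
     ((trunc_id q (z + e) - trunc_id q z - trunc_id q e) * Psi z e * G z * G e)%:E =
   - (2%:E * \int[leb]_(z in [set x | (0 < x < q)%R])
       \int[leb]_(e in [set x | (q - z < x)%R]) (z * Psi z e * G z * G e)%:E))%E.
Proof.
rewrite integral_defect -integral_flux.
rewrite (ge0_integral_symmetrize leb (fun p => (flux p.1 p.2)%:E)) //.
by move=> p; rewrite lee_fin.
Qed.

Lemma crossing_integral_ge0 :
  (0 <= \int[leb]_(z in [set x | (0 < x < q)%R])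
          \int[leb]_(e in [set x | (q - z < x)%R]) (z * Psi z e * G z * G e)%:E)%E.
Proof.
apply: integral_ge0 => z /andP[z_gt0 zq]; apply: integral_ge0 => e ze.
have e_gt0 : 0 < e by apply: le_lt_trans ze; rewrite subr_ge0 ltW.
by rewrite lee_fin !mulr_ge0 ?G_ge0 ?Psi_ge0 // ltW.
Qed.

End collision_term.

Lemma Itime0_lt {R : realType} {T : \bar R} {t s : R} :
  Itime T t -> 0 < s < t -> Itime0 T s.
Proof. by move=> [_ tT] /andP[s_gt0 st]; split; [exact: ltW|exact: lt_trans tT]. Qed.

Theorem lemma3p1 (R : realType) (beta k : R) (Psi : R -> R -> R)
    (T : \bar R) (gin : R -> R) (g : R -> R -> R) :
  kernel_assumptions beta k Psi ->
  (0 < T)%E ->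
  (forall z, 0 < z -> 0 <= gin z) ->
  in_L1w beta gin ->
  weak_solution beta Psi T gin g ->
  forall q t : R, 0 < q -> Itime T t ->
  (\int[@lebesgue_measure R]_(z in [set x | (0 < x < q)%R]) (z * g z t)%:E
   - \int[@lebesgue_measure R]_(z in [set x | (0 < x < q)%R]) (z * gin z)%:E =
   - \int[@lebesgue_measure R]_(s in [set x | (0 < x < t)%R])
       \int[@lebesgue_measure R]_(z in [set x | (0 < x < q)%R])
         \int[@lebesgue_measure R]_(e in [set x | (q - z < x)%R])
           (z * Psi z e * g z s * g e s)%:E)%E.
Proof.
move=> [_ [_ [mPsi [Psi_ge0 [Psi_sym _]]]]] _ _ gin_L1w
  [g_ge0 [_ [g_int [_ [_ weak]]]]] q t q_gt0 tT.
have gt_int : (@lebesgue_measure R).-integrable (@Ipos R) (EFin \o g^~ t).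
  by apply: g_int; case: tT => t_gt0 t_lt_T; split; [exact: ltW|].
rewrite -integral_diff_mul_trunc_id; last 2 first.
- exact: integrable_mul_trunc_id (ltW q_gt0) gt_int.
- exact: in_L1w_integrable_mul_trunc_id gin_L1w.
rewrite (weak t tT _ (trunc_id_in_Linfty q (ltW q_gt0))).
under eq_integral => s /set_mem /(Itime0_lt tT) sT.
  have /integrableP[/measurable_EFinP mgs _] := g_int s sT.
  rewrite integral_collision_trunc_id // => [|z z_gt0]; last exact: g_ge0.
  over.
rewrite integral_ge0N => [|s /(Itime0_lt tT) sT]; last first.
  by rewrite mule_ge0 //; apply: crossing_integral_ge0 => // z z_gt0; exact: g_ge0.
rewrite ge0_integralZl_nonmeas // => [|s /(Itime0_lt tT) sT]; last first.
  by apply: crossing_integral_ge0 => // z z_gt0; exact: g_ge0.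
by rewrite muleN muleA -EFinM mulVf ?pnatr_eq0 // mul1e.
Qed.
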